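(* Let $T$ be a tree with no vertex of valency one, with the two parts of its natural bipartition denoted $V_1, V_2$. Suppose $G\le \mathrm{Aut}(T)$ is closed and fixes $V_1$ and $V_2$ setwise. Then $G|_{V_i}$ is closed in $\mathrm{Sym}(V_i)$ for $i=1,2$. Moreover, if for every vertex $v$ the group $G_v|_{B(v)}$ is closed in $\mathrm{Sym}(B(v))$, then the following are equivalent: (1) for all $v\in V_1$ and $w\in V_2$, all point stabilisers in $G_v|_{B(v)}$ are compact and $G_w|_{B(w)}$ is compact; (2) all point stabilisers in $G|_{V_2}$ are compact.
   Context: $B(v)$ is the set of neighbours of $v$; $G_v$ is the stabiliser of $v$ and $G_v|_{B(v)}$ the permutation group it induces on $B(v)$; $G|_{V_i}$ is the permutation group induced by $G$ on $V_i$. For any set $V$, $\mathrm{Sym}(V)$ carries the permutation topology (topology of pointwise convergence, with pointwise stabilisers of finite subsets forming a basis of identity neighbourhoods), and $\mathrm{Aut}(T)$ carries this topology as a group of permutations of $VT$. *)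

From HB Require Import structures.
From mathcomp Require Import all_boot all_order all_algebra.
From mathcomp Require Import all_classical all_reals topology.
Set Implicit Arguments. Unset Strict Implicit. Unset Printing Implicit Defensive.
Local Open Scope classical_set_scope.

Definition simple_graph (V : Type) (E : rel V) : Prop :=
  (forall x y, E x y = E y x) /\ (forall x, ~~ E x x).

Definition connected_graph (V : eqType) (E : rel V) : Prop :=
  forall x y : V, exists p : seq V, path E x p /\ last x p = y.

(** acyclic: no cycle x :: p (at least 3 distinct vertices, consecutive
    ones adjacent, last adjacent to first) *)
Definition acyclic_graph (V : eqType) (E : rel V) : Prop :=
  ~ exists (x : V) (p : seq V),
      [/\ 2 <= size p, uniq (x :: p), path E x p & E (last x p) x].

Definition is_tree (V : eqType) (E : rel V) : Prop :=
  [/\ simple_graph E, connected_graph E & acyclic_graph E].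

(** B(v) = neighbours of v; v has valency one iff B(v) is a singleton *)
Definition valency_one (V : Type) (E : rel V) (v : V) : Prop :=
  exists u, E v u /\ forall w, E v w -> w = u.

(** proper 2-colouring: the two parts of the bipartition are
    V_b = [set x | c x == b] *)
Definition bipartition (V : Type) (E : rel V) (c : V -> bool) : Prop :=
  forall x y, E x y -> c x != c y.

Definition part (V : Type) (c : V -> bool) (b : bool) : pred V :=
  fun x => c x == b.

Definition is_aut (V : Type) (E : rel V) (g : V -> V) : Prop :=
  bijective g /\ forall x y, E (g x) (g y) = E x y.

Definition subgroup_Aut (V : Type) (E : rel V) (G : set (V -> V)) : Prop :=
  [/\ (forall g, G g -> is_aut E g),
      G id,
      (forall g h, G g -> G h -> G (g \o h))
    & (forall g, G g -> exists2 h, G h & cancel g h /\ cancel h g)].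

(** Sym(X) with the permutation topology: the subspace of bijections of the
    space of functions X -> X with the topology of pointwise convergence,
    X being discrete. *)
Definition ptws_space (X : choiceType) := {ptws X -> discrete_topology X}.

Definition closed_in_Sym (X : choiceType) (S : set (X -> X)) : Prop :=
  forall f : ptws_space X, bijective f ->
    closure (S : set (ptws_space X)) f -> S f.

Definition closed_in_Aut (V : choiceType) (E : rel V) (G : set (V -> V)) : Prop :=
  forall f : ptws_space V, is_aut E f ->
    closure (G : set (ptws_space V)) f -> G f.

(** compactness in Sym(X) (compactness of a subset is intrinsic) *)
Definition compact_in_Sym (X : choiceType) (S : set (X -> X)) : Prop :=
  compact (S : set (ptws_space X)).

Definition stab (X : Type) (S : set (X -> X)) (x : X) : set (X -> X) :=
  [set g | S g /\ g x = x].

Definition induced_on (V : Type) (P : pred V) (S : set (V -> V)) :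
    set ({x : V | P x} -> {x : V | P x}) :=
  [set p | exists2 g, S g & forall x, val (p x) = g (val x)].
Arguments induced_on {V} P S _.
Arguments stab {X} S x _.

From HB Require Import structures.
From mathcomp Require Import all_boot all_order all_algebra.
From mathcomp Require Import all_classical all_reals topology.
Set Implicit Arguments. Unset Strict Implicit. Unset Printing Implicit Defensive.
Local Open Scope classical_set_scope.

(* Every element of G is determined by its restriction to V_b: a vertex outside
   V_b has two distinct neighbours, all in V_b, and in a tree it is their only
   common neighbour.  Hence a limit of restrictions to V_b extends to a limit of
   elements of G on all of V, which lies in G since G is closed.
   A closed permutation group is compact iff all its orbits are finite
   (Tychonoff), so both conditions of the equivalence are statements about
   finite orbits of stabilisers.  Walking from x in V_2 along a path and fixing
   one more vertex at each step, the orbits of G_x are finite iff those of the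
   local stabilisers in (1) are. *)

Definition orbit_set (X : Type) (S : set (X -> X)) (y : X) : set X :=
  [set g y | g in S].

Definition inverse_closed (X : Type) (S : set (X -> X)) : Prop :=
  forall g, S g -> exists2 h, S h & cancel g h /\ cancel h g.

Lemma inverse_closed_inj (X : Type) (S : set (X -> X)) :
  inverse_closed S -> forall g, S g -> injective g.
Proof. by move=> Sinv g /Sinv[h _ [gK _]]; exact: can_inj gK. Qed.

Lemma inverse_closed_stab (X : Type) (S : set (X -> X)) x :
  inverse_closed S -> inverse_closed (stab S x).
Proof.
move=> Sinv g [Sg gx]; have [h Sh [gK hK]] := Sinv g Sg.
by exists h => //; split => //; rewrite -{1}gx gK.
Qed.

Section PermutationTopology.
Variable X : choiceType.

Lemma nbhs_agree (f : ptws_space X) (s : seq X) :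
  nbhs f [set g : ptws_space X | {in s, g =1 f}].
Proof.
elim: s => [|a s IH]; first by apply: filterS filterT => g _ x; rewrite in_nil.
have ev : nbhs f [set g : ptws_space X | g a = f a].
  exact: (@proj_continuous X (fun _ => discrete_topology X) a f)
    _ (@discrete_set1 (discrete_topology X) (f a)).
apply: filterS (filterI ev IH) => g [ga gs] x.
by rewrite in_cons => /orP[/eqP->|/gs].
Qed.

Lemma agree_cvg (f : ptws_space X) :
  filter_from [set: seq X] (fun s => [set g : ptws_space X | {in s, g =1 f}])
  --> f.
Proof.
set F := filter_from _ _; have FF : Filter F.
  apply: filter_from_filter; first by exists [::].
  move=> s t _ _; exists (s ++ t) => // g gst.
  by split=> x xs; apply: gst; rewrite mem_cat xs ?orbT.
apply/cvg_sup => t; apply/cvg_image.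
  by apply/seteqP; split => // u _; exists (fun _ => u).
move=> U /= Uft.
exists ([set g : ptws_space X | {in [:: t], g =1 f}] `|`
        [set g : ptws_space X | U (g t)]).
  by exists [:: t] => // g ag; left.
have Uf : U (f t) := nbhs_singleton Uft.
apply/seteqP; split => [_ [g [ag|Ug] <-]|u Uu] //; first by rewrite ag ?mem_head.
by exists (fun _ => u) => //; right.
Qed.

Lemma nbhs_agreeP (f : ptws_space X) (B : set (ptws_space X)) :
  nbhs f B <-> exists s : seq X, [set g : ptws_space X | {in s, g =1 f}] `<=` B.
Proof.
split=> [fB|[s sB]].
  by have [s _ sB] := agree_cvg fB; exists s.
apply: filterS (nbhs_agree f s) => g; exact: sB.
Qed.

Lemma closure_SymP (A : set (X -> X)) (f : ptws_space X) :
  closure (A : set (ptws_space X)) f <->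
  forall s : seq X, exists2 g, A g & {in s, g =1 f}.
Proof.
split=> [clf s|Af B /nbhs_agreeP[s sB]].
  by have [g [Ag ag]] := clf _ (nbhs_agree f s); exists g.
by have [g Ag ag] := Af s; exists g; split => //; apply: sB.
Qed.

Lemma closed_stab (S : set (X -> X)) x :
  closed_in_Sym S -> closed_in_Sym (stab S x).
Proof.
move=> Scl f fbij /closure_SymP clf; split.
  apply: Scl => //; apply/closure_SymP => s.
  by have [g [Sg _] ag] := clf s; exists g.
by have [g [_ gx] ag] := clf [:: x]; rewrite -(ag x (mem_head _ _)).
Qed.

Lemma closure_adj (E : rel X) (S : set (X -> X)) (f : ptws_space X) :
  (forall g, S g -> forall x y, E (g x) (g y) = E x y) ->
  closure (S : set (ptws_space X)) f -> forall x y, E (f x) (f y) = E x y.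
Proof.
move=> SE /closure_SymP clf x y; have [g Sg ag] := clf [:: x; y].
by rewrite -!ag ?inE ?eqxx ?orbT // SE.
Qed.

Lemma closure_inj (S : set (X -> X)) (f : ptws_space X) :
  (forall g, S g -> injective g) ->
  closure (S : set (ptws_space X)) f -> injective f.
Proof.
move=> Sinj /closure_SymP clf x y fxy; have [g Sg ag] := clf [:: x; y].
by apply: (Sinj g Sg); rewrite !ag ?inE ?eqxx ?orbT.
Qed.

(* In the closure, a preimage of [y] can be read off the finite orbit of [y]. *)
Lemma closure_bij (S : set (X -> X)) (f : ptws_space X) :
  inverse_closed S -> (forall x, finite_set (orbit_set S x)) ->
  closure (S : set (ptws_space X)) f -> bijective f.
Proof.
move=> Sinv Sfin clf.
have finj := closure_inj (inverse_closed_inj Sinv) clf.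
rewrite -setTT_bijective; split=> // [x y _ _ /finj //|y _].
have [s Es] := (finite_seqP _).1 (Sfin y).
move/closure_SymP: clf => /(_ s) [g Sg ag]; have [h Sh [_ hK]] := Sinv g Sg.
exists (h y) => //; rewrite -ag ?hK //.
have : orbit_set S y (h y) by exists h.
by rewrite Es.
Qed.

(* An infinite orbit of [x] yields a proper filter on [S] of maps avoiding any
   given finite set at [x]; a cluster point [p] of it would avoid [p x] at [x]. *)
Lemma compact_orbit_finite (S : set (X -> X)) x :
  compact_in_Sym S -> finite_set (orbit_set S x).
Proof.
move=> cS; apply: contrapT => Oinf.
pose B (K : seq X) := (S : set (ptws_space X)) `&` [set g | g x \notin K].
have FF : Filter (filter_from [set: seq X] B).
  apply: filter_from_filter; first by exists [::].
  move=> K L _ _; exists (K ++ L) => // g [Sg] /=.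
  by rewrite mem_cat negb_or => /andP[].
have PF : ProperFilter (filter_from [set: seq X] B).
  apply: filter_from_proper => K _; apply/set0P/negP => /eqP BK0.
  apply: Oinf; apply: (sub_finite_set _ (finite_seq K)) => _ [g Sg <-].
  apply: contrapT => /negP gK.
  by have : B K g by []; rewrite BK0.
have [p [Sp clp]] : exists p, S p /\ cluster (filter_from [set: seq X] B) p.
  by apply: cS; exists [::] => // g [].
have FB : filter_from [set: seq X] B (B [:: p x]) by exists [:: p x].
have [g [[Sg gx] ag]] := clp _ _ FB (nbhs_agree p [:: x]).
by move: gx; rewrite /= (ag x (mem_head _ _)) mem_head.
Qed.

Lemma compact_of_finite_orbits (S : set (X -> X)) :
  closed_in_Sym S -> inverse_closed S ->
  (forall x, finite_set (orbit_set S x)) -> compact_in_Sym S.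
Proof.
move=> Scl Sinv Sfin.
apply: (@subclosed_compact _ _
  [set f : ptws_space X | forall x, orbit_set S x (f x)]).
- by move=> f clf; apply: Scl => //; exact: closure_bij clf.
- exact: (@tychonoff X (fun _ => discrete_topology X) (orbit_set S)
    (fun x => @finite_compact (discrete_topology X) _ (Sfin x))).
- by move=> f Sf x; exists f.
Qed.

Lemma compact_SymE (S : set (X -> X)) :
  closed_in_Sym S -> inverse_closed S ->
  compact_in_Sym S <-> forall x, finite_set (orbit_set S x).
Proof.
move=> Scl Sinv; split=> [cS x|]; first exact: compact_orbit_finite.
exact: compact_of_finite_orbits.
Qed.
End PermutationTopology.

Section InducedGroup.
Variables (V : choiceType) (P : pred V).

Definition lift_on (g : V -> V) (gP : {homo g : u / P u}) :
    {x : V | P x} -> {x : V | P x} :=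
  fun z => exist (fun x => P x) (g (val z)) (gP _ (valP z)).

Variables (S : set (V -> V)) (S_P : forall g, S g -> {homo g : u / P u}).

Lemma lift_onP g (Sg : S g) : induced_on P S (lift_on (S_P Sg)).
Proof. by exists g. Qed.

Lemma inverse_closed_induced : inverse_closed S -> inverse_closed (induced_on P S).
Proof.
move=> Sinv q [g Sg qg]; have [h Sh [gK hK]] := Sinv g Sg.
exists (lift_on (S_P Sh)); first exact: lift_onP.
by split=> z; apply: val_inj; rewrite /= qg ?gK ?hK.
Qed.

Lemma val_orbit_induced y :
  val @` orbit_set (induced_on P S) y = orbit_set S (val y).
Proof.
apply/seteqP; split=> [_ [_ [q [g Sg qg] <-] <-]|_ [g Sg <-]].
  by exists g; last rewrite qg.
exists (lift_on (S_P Sg) y) => //.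
by exists (lift_on (S_P Sg)); first exact: lift_onP.
Qed.

Lemma finite_orbit_inducedE y :
  finite_set (orbit_set (induced_on P S) y) <-> finite_set (orbit_set S (val y)).
Proof.
rewrite -val_orbit_induced; split; first exact: finite_image.
move=> fin; apply: (sub_finite_set _ (finite_preimage _ fin)).
  by move=> z Oz; exists z.
by move=> z1 z2 _ _; exact: val_inj.
Qed.

Lemma stab_induced x : stab (induced_on P S) x = induced_on P (stab S (val x)).
Proof.
apply/seteqP; split=> [q [[g Sg qg] qx]|q [g [Sg gx] qg]].
  by exists g => //; split; rewrite // -qg qx.
by split; [exists g | apply: val_inj; rewrite qg].
Qed.

Lemma compact_inducedE :
  inverse_closed S -> closed_in_Sym (induced_on P S) ->
  compact_in_Sym (induced_on P S) <->
  forall y : {x : V | P x}, finite_set (orbit_set S (val y)).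
Proof.
move=> Sinv Scl; rewrite compact_SymE //; last exact: inverse_closed_induced.
by split=> fin y; apply/finite_orbit_inducedE.
Qed.
End InducedGroup.

Lemma compact_stab_inducedE (V : choiceType) (P : pred V) (S : set (V -> V)) x :
  (forall g, S g -> {homo g : u / P u}) -> inverse_closed S ->
  closed_in_Sym (induced_on P S) ->
  compact_in_Sym (stab (induced_on P S) x) <->
  forall y : {x : V | P x}, finite_set (orbit_set (stab S (val x)) (val y)).
Proof.
move=> S_P Sinv Scl.
have := closed_stab (x := x) Scl; rewrite stab_induced => Sxcl.
apply: compact_inducedE => // [g [Sg _]|]; first exact: S_P.
exact: inverse_closed_stab.
Qed.

Lemma forall_sigP (T : Type) (P : pred T) (Q : T -> Prop) :
  (forall y : {x | P x}, Q (val y)) <-> forall y, P y -> Q y.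
Proof.
by split=> [H y Py|H y]; [exact: (H (exist _ y Py)) | exact: H (valP y)].
Qed.

Section OrbitCounting.
Variables (X : eqType) (S : set (X -> X)).

Definition pstab (s : seq X) : set (X -> X) :=
  [set g | S g /\ {in s, forall u, g u = u}].

Lemma finite_orbit_determined x y :
  (forall g h, S g -> S h -> g x = h x -> g y = h y) ->
  finite_set (orbit_set S x) -> finite_set (orbit_set S y).
Proof.
move=> det fin_x.
have /choice[F FP] : forall a, exists b, forall g, S g -> g x = a -> g y = b.
  move=> a.
  case: (pselect (exists2 g0, S g0 & g0 x = a)) => [[g0 Sg0 <-]|noa].
    by exists (g0 y) => g Sg; exact: det.
  by exists y => g Sg gxa; case: noa; exists g.
apply: (sub_finite_set _ (finite_image F fin_x)) => _ [g Sg <-].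
by exists (g x); [exists g | rewrite (FP (g x) g Sg)].
Qed.

Hypotheses (S_comp : forall g h, S g -> S h -> S (g \o h))
  (S_inv : inverse_closed S).

(* [map g (rcons s z)] is determined by [t := map g s] and by the image of [z]
   under [rep t ^-1 \o g], a map fixing [s] pointwise. *)
Lemma finite_orbit_rcons s z :
  finite_set [set map g s | g in S] -> finite_set (orbit_set (pstab s) z) ->
  finite_set [set map g (rcons s z) | g in S].
Proof.
move=> fin_s fin_z; pose T := [set map g s | g in S].
have /choice[rep repP] : forall t, exists r, T t -> S r /\ map r s = t.
  by move=> t; case: (pselect (T t)) => [[g Sg <-]|nT]; [exists g | exists id].
apply: (sub_finite_set _ (bigcup_finite fin_s
  (fun t _ => finite_image (fun a => rcons t (rep t a)) fin_z))).
move=> _ [g Sg <-]; have Tt : T (map g s) by exists g.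
have [Sr rs] := repP _ Tt; have [k Sk [rK kK]] := S_inv Sr.
exists (map g s) => //; exists (k (g z)); last by rewrite kK map_rcons.
exists (k \o g); split => [|u us /=]; first exact: S_comp.
by have := (eq_in_map _ _ _).2 rs u us => /= <-; rewrite rK.
Qed.
End OrbitCounting.

Section TreeAction.
Variables (V : choiceType) (E : rel V) (c : V -> bool) (G : set (V -> V)).
Hypotheses (tree : is_tree E) (leafless : forall v, ~ valency_one E v).
Hypotheses (bip : bipartition E c) (Gsub : subgroup_Aut E G).
Hypothesis G_colour : forall g x, G g -> c (g x) = c x.

Lemma adj_sym x y : E x y = E y x.
Proof. by case: tree => [[]]. Qed.

Lemma adj_neq x y : E x y -> x != y.
Proof. by case: tree => [[_ irr] _ _]; apply: contraTneq => ->; exact: irr. Qed.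

Lemma colour_adj x y : E x y -> c y = ~~ c x.
Proof. by move/bip; case: (c x); case: (c y). Qed.

Lemma common_nbr_uniq a a' y z :
  E a y -> E a z -> E a' y -> E a' z -> y != z -> a = a'.
Proof.
move=> ay az a'y a'z yz; case: (eqVneq a a') => // aa'.
case: tree => _ _; case.
exists y, [:: a; z; a']; split => //=; last by rewrite adj_sym ay az adj_sym a'z.
have ya : y != a by rewrite eq_sym adj_neq.
have ya' : y != a' by rewrite eq_sym adj_neq.
have za' : z != a' by rewrite eq_sym adj_neq.
by rewrite !inE !negb_or ya yz ya' (adj_neq az) aa' za'.
Qed.

Lemma other_nbr v u : E v u -> exists2 u', E v u' & u' != u.
Proof.
move=> vu; apply: contrapT => nou.
apply: (@leafless v); exists u; split => // w vw.
by apply: contrapT => wu; apply: nou; exists w => //; exact/eqP.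
Qed.

Lemma isolated_eq v : (forall u, ~ E v u) -> forall y, y = v.
Proof.
move=> iso y; case: tree => _ /(_ v y) [[|a p] [pa <-]] //.
by move: pa => /= /andP[/iso].
Qed.

Lemma G_inverse_closed : inverse_closed G.
Proof. by case: Gsub. Qed.

Lemma G_inj g : G g -> injective g.
Proof. exact: inverse_closed_inj G_inverse_closed g. Qed.

Lemma G_adj g : G g -> forall x y, E (g x) (g y) = E x y.
Proof. by case: Gsub => + _ _ _ => /[apply] -[]. Qed.

Lemma G_comp g h : G g -> G h -> G (g \o h).
Proof. by case: Gsub => _ _ + _; apply. Qed.

Lemma G_eq_on_nbrs g h v u1 u2 : G g -> G h ->
  E v u1 -> E v u2 -> u1 != u2 -> g u1 = h u1 -> g u2 = h u2 -> g v = h v.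
Proof.
move=> Gg Gh vu1 vu2 u12 e1 e2.
apply: (@common_nbr_uniq _ _ (g u1) (g u2)); rewrite ?G_adj ?e1 ?e2 ?G_adj //.
by rewrite -e1 -e2 (inj_eq (G_inj Gg)).
Qed.

Lemma local_orbits_of_V2_orbits :
  (forall x y, c x = false -> c y = false ->
     finite_set (orbit_set (stab G x) y)) ->
  (forall v x y, c v = true -> E v x -> E v y ->
     finite_set (orbit_set (stab (stab G v) x) y)) /\
  (forall w y, c w = false -> E w y -> finite_set (orbit_set (stab G w) y)).
Proof.
move=> fin2; split=> [v x y cv vx vy|w y cw wy].
  have cx : c x = false by rewrite (colour_adj vx) cv.
  have cy : c y = false by rewrite (colour_adj vy) cv.
  apply: (sub_finite_set _ (fin2 x y cx cy)) => _ [g [[Gg _] gx] <-].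
  by exists g.
have yw : E y w by rewrite adj_sym.
have [y' yy' y'w] := other_nbr yw.
have cy' : c y' = false by rewrite (colour_adj yy') (colour_adj wy) cw.
apply: (finite_orbit_determined _ (fin2 w y' cw cy')) => g h [Gg gw] [Gh hw] gy'.
by apply: (G_eq_on_nbrs Gg Gh yw yy'); rewrite 1?eq_sym ?gw ?hw.
Qed.

Section V2OrbitsFromLocal.
Hypothesis local_V1 : forall v x y, c v = true -> E v x -> E v y ->
  finite_set (orbit_set (stab (stab G v) x) y).
Hypothesis local_V2 : forall w y, c w = false -> E w y ->
  finite_set (orbit_set (stab G w) y).
Variable x : V.
Hypothesis cx : c x = false.

(* The last vertex of the walk lies in V_1 or V_2; in the first case the walk
   has a previous vertex, which is also fixed. *)
Lemma finite_orbit_pstab_walk q z : path E x q -> E (last x q) z ->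
  finite_set (orbit_set (pstab (stab G x) (x :: q)) z).
Proof.
case cl: (c (last x q)) => xq lz; last first.
  apply: (sub_finite_set _ (local_V2 cl lz)) => _ [h [[Gh _] hq] <-].
  by exists h => //; split => //; apply: hq; exact: mem_last.
move: xq lz cl; case/lastP: q => [|q m]; first by rewrite /= cx.
rewrite rcons_path last_rcons => /andP[_ qm] mz cm.
have mq : E m (last x q) by rewrite adj_sym.
apply: (sub_finite_set _ (local_V1 cm mq mz)) => _ [h [[Gh _] hq] <-].
exists h => //; split; [split => //|]; apply: hq.
  by rewrite -rcons_cons mem_rcons mem_head.
by rewrite -rcons_cons mem_rcons inE mem_last orbT.
Qed.

Lemma finite_walk_images p : path E x p ->
  finite_set [set map g (x :: p) | g in stab G x].
Proof.
elim/last_ind: p => [_|q z IH].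
  apply: (sub_finite_set _ (finite_set1 [:: x])) => _ [g [_ gx] <-].
  by rewrite /= gx.
rewrite rcons_path => /andP[xq qz]; rewrite -rcons_cons.
apply: finite_orbit_rcons (IH xq) (finite_orbit_pstab_walk xq qz).
- by move=> g h [Gg gx] [Gh hx]; split; [exact: G_comp | rewrite /= hx gx].
- exact/inverse_closed_stab/G_inverse_closed.
Qed.

Lemma V2_orbits_of_local_orbits y : finite_set (orbit_set (stab G x) y).
Proof.
case: tree => _ /(_ x y) [p [xp <-]] _.
apply: (sub_finite_set _ (finite_image (last x) (finite_walk_images xp))).
move=> _ [g gx <-]; exists (map g (x :: p)); first by exists g.
by rewrite /= last_map.
Qed.
End V2OrbitsFromLocal.

Hypothesis G_closed : closed_in_Aut E G.

Section OnePart.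
Variable b : bool.

Lemma nbr_part v u : c v != b -> E v u -> part c b u.
Proof. by move=> cv /colour_adj; rewrite /part => ->; case: b cv; case: (c v). Qed.

(* A vertex outside [part c b] is either alone in the tree or has two distinct
   neighbours, all of which lie in [part c b]. *)
Lemma part_determines v : exists D : seq V, all (part c b) D /\
  forall g h, G g -> G h -> {in D, g =1 h} -> g v = h v.
Proof.
case: (eqVneq (c v) b) => [cv|cv].
  exists [:: v]; rewrite /= /part cv eqxx.
  by split=> // g h _ _; apply; rewrite mem_head.
case: (pselect (exists u, E v u)) => [[u1 vu1]|iso]; last first.
  have iso_eq := isolated_eq (fun u vu => iso (ex_intro _ u vu)).
  by exists [::]; split=> // g h _ _ _; rewrite (iso_eq (g v)) (iso_eq (h v)).
have [u2 vu2 u21] := other_nbr vu1.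
exists [:: u1; u2]; split=> [|g h]; first by rewrite /= !(nbr_part cv).
move=> Gg Gh gh; apply: (G_eq_on_nbrs Gg Gh vu1 vu2);
  by rewrite 1?eq_sym // gh // !inE eqxx ?orbT.
Qed.

Lemma extend_from_part (phi : V -> V) :
  (forall s, all (part c b) s -> exists2 g, G g & {in s, g =1 phi}) ->
  exists f : V -> V,
    (forall s : seq V, exists2 g, G g & {in s, g =1 f}) /\ {in part c b, f =1 phi}.
Proof.
move=> phi_app; have /choice[D DP] := part_determines.
have /choice[gs gsP] : forall s, exists g,
    all (part c b) s -> G g /\ {in s, g =1 phi}.
  move=> s; case: (pselect (all (part c b) s)) => [/phi_app[g Gg gphi]|nall].
    by exists g.
  by exists id.
pose f v := gs (D v) v.
have gs_agree s v : all (part c b) s -> {subset (D v) <= s} -> gs s v = f v.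
  move=> sP Dv_s; have [Gs phis] := gsP s sP; have [Gv phiv] := gsP _ (DP v).1.
  by rewrite /f; apply: (DP v).2 => // u uD; rewrite phis ?phiv ?Dv_s.
exists f; split=> [s|v vP].
  have Ds_part : all (part c b) (flatten (map D s)).
    by apply/allP => u /flatten_mapP[v _ uD]; exact: (allP (DP v).1).
  exists (gs (flatten (map D s))); first exact: (gsP _ Ds_part).1.
  by move=> v vs; apply: gs_agree => // u uD; apply/flatten_mapP; exists v.
have vD_part : all (part c b) (v :: D v) by rewrite /= (DP v).1 andbT.
rewrite -(gs_agree _ _ vD_part) ?(gsP _ vD_part).2 ?mem_head // => u uD.
by rewrite inE uD orbT.
Qed.

Lemma surj_from_part f :
  (forall s : seq V, exists2 g, G g & {in s, g =1 f}) ->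
  (forall x y, E (f x) (f y) = E x y) ->
  (forall y, part c b y -> exists x, f x = y) -> forall y, exists x, f x = y.
Proof.
move=> f_app f_adj f_part y.
case: (eqVneq (c y) b) => cy; first by apply: f_part; apply/eqP.
case: (pselect (exists u, E y u)) => [[y1 yy1]|iso]; last first.
  have iso_eq := isolated_eq (fun u yu => iso (ex_intro _ u yu)).
  by exists y; rewrite (iso_eq (f y)).
have [y2 yy2 y21] := other_nbr yy1.
have [x1 fx1] := f_part _ (nbr_part cy yy1).
have [x2 fx2] := f_part _ (nbr_part cy yy2).
have [g Gg gf] := f_app [:: x1; x2]; have [h Gh [_ hK]] := G_inverse_closed Gg.
have hy_adj x : x \in [:: x1; x2] -> E (h y) x = E y (f x).
  by move=> xs; rewrite -(G_adj Gg) hK gf.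
exists (h y); apply: (@common_nbr_uniq _ _ y2 y1) => //.
- by rewrite -fx2 f_adj hy_adj ?fx2 ?inE ?eqxx ?orbT.
- by rewrite -fx1 f_adj hy_adj ?fx1 ?inE ?eqxx.
Qed.

Lemma closed_induced_part : closed_in_Sym (induced_on (part c b) G).
Proof.
move=> p pbij /closure_SymP clp.
pose phi v := oapp (fun w => val (p w)) v (insub v : option {x | part c b x}).
have phiE w : phi (val w) = val (p w) by rewrite /phi valK.
have phi_app s : all (part c b) s -> exists2 g, G g & {in s, g =1 phi}.
  move=> sP; have [q [g Gg qg] qp] := clp (pmap insub s).
  exists g => // v vs; have vP : part c b v := allP sP v vs.
  by rewrite -[v](@SubK _ _ {x | part c b x} _ vP) -qg phiE qp // mem_pmap_sub.
have [f [f_app f_phi]] := extend_from_part phi_app.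
have clf : closure (G : set (ptws_space V)) f by apply/closure_SymP.
have f_inj := closure_inj (fun g Gg => G_inj Gg) clf.
have f_adj := closure_adj (fun g Gg => G_adj Gg) clf.
have f_part y : part c b y -> exists x, f x = y.
  move=> yP; have [pinv _ pK] := pbij.
  exists (val (pinv (Sub y yP))); rewrite f_phi ?phiE ?pK ?SubK //.
  exact: valP.
have f_bij : bijective f.
  rewrite -setTT_bijective; split=> // [x y _ _ /f_inj //|y _].
  by have [x fx] := surj_from_part f_app f_adj f_part y; exists x.
exists f; first by apply: G_closed => //; split.
by move=> w; rewrite f_phi ?phiE //; exact: valP.
Qed.
End OnePart.

Lemma compact_V2_stabsE :
  (forall x : {u | part c false u},
     compact_in_Sym (stab (induced_on (part c false) G) x)) <->
  (forall x y, c x = false -> c y = false ->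
     finite_set (orbit_set (stab G x) y)).
Proof.
have G_part g : G g -> {homo g : u / part c false u}.
  by move=> Gg u; rewrite /part G_colour.
have fin_stabE x := compact_stab_inducedE x G_part G_inverse_closed
  (closed_induced_part (b := false)).
split=> [cpt x y /eqP cx /eqP cy|fin2 x].
  by have /fin_stabE/(_ (exist _ y cy)) := cpt (exist _ x cx).
apply/fin_stabE => y.
by apply: fin2; apply/eqP; [exact: (valP x) | exact: (valP y)].
Qed.

Lemma compact_local_actionsE :
  (forall v, closed_in_Sym (induced_on (E v) (stab G v))) ->
  (forall v w, c v = true -> c w = false ->
     (forall x : {u | E v u},
        compact_in_Sym (stab (induced_on (E v) (stab G v)) x)) /\
     compact_in_Sym (induced_on (E w) (stab G w))) <->
  (forall v x y, c v = true -> E v x -> E v y ->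
     finite_set (orbit_set (stab (stab G v) x) y)) /\
  (forall w y, c w = false -> E w y -> finite_set (orbit_set (stab G w) y)).
Proof.
move=> clB.
have stab_nbr v g : stab G v g -> {homo g : u / E v u}.
  by move=> [Gg gv] u vu; rewrite -gv G_adj.
have stab_inv v := inverse_closed_stab (x := v) G_inverse_closed.
have cpt1 v x : compact_in_Sym (stab (induced_on (E v) (stab G v)) x) <->
    forall y, E v y -> finite_set (orbit_set (stab (stab G v) (val x)) y).
  exact: iff_trans (compact_stab_inducedE x (@stab_nbr v) (stab_inv v) (clB v))
    (forall_sigP _ (fun y => finite_set (orbit_set (stab (stab G v) (val x)) y))).
have cpt2 w : compact_in_Sym (induced_on (E w) (stab G w)) <->
    forall y, E w y -> finite_set (orbit_set (stab G w) y).
  exact: iff_trans (compact_inducedE (@stab_nbr w) (stab_inv w) (clB w))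
    (forall_sigP _ (fun y => finite_set (orbit_set (stab G w) y))).
split=> [cpt|[loc1 loc2] v w cv cw].
  split=> [v x y cv vx vy|w y cw wy].
    have cx : c x = false by rewrite (colour_adj vx) cv.
    exact: (cpt1 v (exist _ x vx)).1 ((cpt v x cv cx).1 _) y vy.
  have cy : c y = true by rewrite (colour_adj wy) cw.
  exact: (cpt2 w).1 (cpt y w cy cw).2 y wy.
split=> [x|]; first by apply/cpt1 => y; exact: loc1 cv (valP x).
by apply/cpt2 => y; exact: loc2 cw.
Qed.
End TreeAction.

Unset Implicit Arguments.

Theorem lemma6p2 (V : choiceType) (E : rel V) (c : V -> bool)
    (G : set (V -> V)) :
  is_tree E ->
  (forall v, ~ valency_one E v) ->
  bipartition E c ->
  subgroup_Aut E G ->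
  closed_in_Aut E G ->
  (forall g x, G g -> c (g x) = c x) ->
  (forall b : bool, closed_in_Sym (induced_on (part c b) G)) /\
  ((forall v : V, closed_in_Sym (induced_on (E v) (stab G v))) ->
   ((forall v w : V, c v = true -> c w = false ->
       (forall x : {u : V | E v u},
          compact_in_Sym (stab (induced_on (E v) (stab G v)) x)) /\
       compact_in_Sym (induced_on (E w) (stab G w)))
    <->
    (forall x : {u : V | part c false u},
       compact_in_Sym (stab (induced_on (part c false) G) x)))).
Proof.
move=> tree leafless bip Gsub Gcl Gc; split=> [b|clB].
  exact: (closed_induced_part tree leafless bip Gsub Gcl (b := b)).
apply: iff_trans (compact_local_actionsE bip Gsub clB) _.
apply: iff_trans _ (iff_sym (compact_V2_stabsE tree leafless bip Gsub Gc Gcl)).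
split=> [[loc1 loc2] x y cx _|fin2].
  exact: (V2_orbits_of_local_orbits tree Gsub loc1 loc2 cx).
exact: (local_orbits_of_V2_orbits tree leafless bip Gsub fin2).
Qed.
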